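(* Let $m>0$, $R>m/2$, and $\lambda\le 0$. Using Euclidean polar coordinates $(r,\theta)$ on the annulus $\{m/2\le r\le R\}$ in the plane, suppose $u=u(r,\theta)$ is a smooth solution of $$u_{rr}+\frac{u_r}{r}+\frac{u_{\theta\theta}}{r^2}+\frac{m}{r^3}\Big(1+\frac{m}{2r}\Big)^{-2}u+\lambda\Big(1+\frac{m}{2r}\Big)^4u=0$$ with $u_r=0$ on $r=m/2$ and $u=0$ on $r=R$. Then (a) $u$ is radial, i.e. $u=u(r)$; and (b) the space of such solutions has dimension at most one, i.e. each non-positive eigenvalue of this problem has multiplicity one.
   Context: This equation with these boundary conditions is the eigenvalue equation $L_{\Sigma_0}u+\lambda e^{2\varphi}u=0$ (written in Euclidean terms) for the Jacobi operator of the plane $\Sigma_0=\{x_3=0\}$ in the Schwarzschild manifold $M=\{|x|\ge m/2\}$, $g=e^{2\varphi}\delta$, $e^{2\varphi}=(1+\frac{m}{2|x|})^4$, restricted to $\{|x|\le R\}$, with Dirichlet condition on $|x|=R$ and the free-boundary (Neumann) condition on the horizon $|x|=m/2$. *)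

From Stdlib Require Import Reals Lra List.
Open Scope R_scope.

(* Closed annulus in polar coordinates: a <= r <= b, theta arbitrary. *)
Definition in_strip (a b r : R) : Prop := a <= r <= b.

Definition deriv_within (a b : R) (g : R -> R) (x l : R) : Prop :=
  forall eps, 0 < eps -> exists delta, 0 < delta /\
    forall h, h <> 0 -> Rabs h < delta -> a <= x + h <= b ->
      Rabs ((g (x + h) - g x) / h - l) < eps.

Definition cont_strip (a b : R) (f : R -> R -> R) : Prop :=
  forall r t, in_strip a b r -> forall eps, 0 < eps -> exists delta, 0 < delta /\
    forall r' t', in_strip a b r' -> Rabs (r' - r) < delta -> Rabs (t' - t) < delta ->
      Rabs (f r' t' - f r t) < eps.

(* F w = iterated partial derivative of u along the word w
   (true = d/dr, false = d/dtheta; the head of w is the last derivative taken). *)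
Definition Cinf_family (a b : R) (u : R -> R -> R) (F : list bool -> R -> R -> R) : Prop :=
  F nil = u /\
  (forall w, cont_strip a b (F w)) /\
  (forall w r t, in_strip a b r ->
      deriv_within a b (fun s => F w s t) r (F (true :: w) r t)) /\
  (forall w r t, in_strip a b r ->
      derivable_pt_lim (fun s => F w r s) t (F (false :: w) r t)).

Definition is_solution (m Rr lam : R) (u : R -> R -> R) : Prop :=
  (forall r t, u r (t + 2 * PI) = u r t) /\
  exists F, Cinf_family (m / 2) Rr u F /\
    (forall r t, in_strip (m / 2) Rr r ->
       F (true :: true :: nil) r t + F (true :: nil) r t / r
       + F (false :: false :: nil) r t / r ^ 2
       + m / r ^ 3 * / (1 + m / (2 * r)) ^ 2 * u r t
       + lam * (1 + m / (2 * r)) ^ 4 * u r t = 0) /\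
    (forall t, F (true :: nil) (m / 2) t = 0) /\
    (forall t, u Rr t = 0).

(* Let V(r) = m r^-3 (1 + m/2r)^-2 + λ (1 + m/2r)^4.  For a solution u and a
   trigonometric mode w of frequency k >= 1 (cos kt or sin kt), the Fourier
   coefficient I(r) = ∫_0^{2π} u(r,t) w(t) dt satisfies, after differentiating
   under the integral sign and integrating by parts twice in t,
       I'' = -I'/r + (k^2/r^2 - V) I,    I'(m/2) = 0,   I(R) = 0.
   Since λ <= 0, k^2/r^2 - V > 0 and the maximum principle gives I = 0.  A
   continuous periodic function with no non-constant Fourier modes is
   constant (tested against the concentrating kernels ((1 + cos)/2)^n), so u
   is radial: part (a).  The radial profile then solves y'' = -y'/r - V y
   with y'(m/2) = 0, and two such solutions are proportional by uniqueness
   for the initial value problem (a Grönwall bound on (y^2 + y'^2) e^{-Cr}):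
   part (b). *)

From Stdlib Require Import Reals Lra Lia Classical_Prop.
From Coquelicot Require Import Coquelicot.
Open Scope R_scope.

Definition cont_within (a b : R) (f : R -> R) (x : R) : Prop :=
  forall eps, 0 < eps -> exists d, 0 < d /\
    forall y, a <= y <= b -> Rabs (y - x) < d -> Rabs (f y - f x) < eps.

(* Composing with the retraction [clamp a b] of R onto [a,b] converts relative
   continuity into ordinary continuity, so Stdlib's theorems apply. *)
Definition clamp (a b x : R) : R := Rmax a (Rmin b x).

Lemma clamp_in a b x : a <= b -> a <= clamp a b x <= b.
Proof. intros; unfold clamp, Rmax, Rmin; repeat destruct Rle_dec; lra. Qed.

Lemma clamp_id a b x : a <= x <= b -> clamp a b x = x.
Proof. intros; unfold clamp, Rmax, Rmin; repeat destruct Rle_dec; lra. Qed.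

Lemma clamp_lip a b x y : a <= b -> Rabs (clamp a b x - clamp a b y) <= Rabs (x - y).
Proof.
  intros; unfold clamp, Rmax, Rmin; repeat destruct Rle_dec;
  unfold Rabs; repeat destruct Rcase_abs; lra.
Qed.

Lemma continuity_pt_clamp a b x : a <= b -> continuity_pt (clamp a b) x.
Proof.
  intros hab eps he. exists eps; split; auto. intros z [_ hz]. simpl in *. unfold R_dist in *.
  eapply Rle_lt_trans; [apply clamp_lip|]; auto.
Qed.

Lemma cont_within_clamp a b f x : a <= b -> a <= x <= b -> cont_within a b f x ->
  continuity_pt (fun s => f (clamp a b s)) x.
Proof.
  intros hab hx hc eps heps. destruct (hc eps heps) as [d [hd H]].
  exists d; split; [lra|]. intros y [_ hy]. simpl in *. unfold R_dist in *.
  rewrite (clamp_id a b x hx). apply H; [apply clamp_in; lra|].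
  replace (clamp a b y - x) with (clamp a b y - clamp a b x) by (rewrite (clamp_id a b x hx); ring).
  eapply Rle_lt_trans; [apply clamp_lip|]; lra.
Qed.

Lemma clamp_cont_within a b f x : a <= x <= b ->
  continuity_pt (fun s => f (clamp a b s)) x -> cont_within a b f x.
Proof.
  intros hx hc eps heps. destruct (hc eps heps) as [d [hd H]].
  exists d; split; [lra|]. intros y hy hyx.
  destruct (Req_dec y x) as [->|hne]; [rewrite Rminus_diag, Rabs_R0; lra|].
  specialize (H y). simpl in H. unfold R_dist in H.
  rewrite (clamp_id a b x hx), (clamp_id a b y hy) in H.
  apply H. split; [split; [exact I|auto]|exact hyx].
Qed.

Lemma continuity_pt_cont_within a b f x : continuity_pt f x -> cont_within a b f x.
Proof.
  intros hc eps heps. destruct (hc eps heps) as [d [hd H]].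
  exists d; split; [lra|]. intros y hy hyx.
  destruct (Req_dec y x) as [->|hne]; [rewrite Rminus_diag, Rabs_R0; lra|].
  apply (H y). split; [split; [exact I|auto]|exact hyx].
Qed.

Lemma cont_within_sub a b x y f s : a <= x -> y <= b ->
  cont_within a b f s -> cont_within x y f s.
Proof.
  intros h1 h2 hc eps heps. destruct (hc eps heps) as [d [hd H]].
  exists d; split; auto. intros z hz. apply H; lra.
Qed.

Lemma cont_within_lincomb a b (f g : R -> R) al be x : a <= b -> a <= x <= b ->
  cont_within a b f x -> cont_within a b g x -> cont_within a b (fun s => al * f s + be * g s) x.
Proof.
  intros hab hx hf hg. apply clamp_cont_within; auto.
  apply (continuity_pt_plus (fun s => al * f (clamp a b s)) (fun s => be * g (clamp a b s)));
    apply continuity_pt_scal; apply cont_within_clamp; auto.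
Qed.

Lemma cont_within_opp a b (f : R -> R) x : cont_within a b f x -> cont_within a b (fun s => - f s) x.
Proof.
  intros hf eps he. destruct (hf eps he) as [d [hd H]]. exists d; split; auto.
  intros z hz hzx. replace (- f z - - f x) with (- (f z - f x)) by ring.
  rewrite Rabs_Ropp; auto.
Qed.

Lemma extreme_value_within a b f : a <= b -> (forall x, a <= x <= b -> cont_within a b f x) ->
  exists M, a <= M <= b /\ forall s, a <= s <= b -> f s <= f M.
Proof.
  intros hab hc.
  destruct (continuity_ab_maj (fun s => f (clamp a b s)) a b hab) as [M [HM HMi]].
  { intros; apply cont_within_clamp; auto. }
  exists M; split; auto. intros s hs. specialize (HM s hs).
  rewrite !clamp_id in HM; auto.
Qed.

Lemma cont_strip_slice a b (G : R -> R -> R) t r : cont_strip a b G -> a <= r <= b ->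
  cont_within a b (fun s => G s t) r.
Proof.
  intros hG hr eps he. destruct (hG r t hr eps he) as [d [hd H]]. exists d; split; auto.
  intros y hy hyr. apply H; auto. rewrite Rminus_diag, Rabs_R0; auto.
Qed.

Lemma deriv_within_interior a b g x l : a < x < b -> deriv_within a b g x l ->
  derivable_pt_lim g x l.
Proof.
  intros hx hd eps heps. destruct (hd eps heps) as [d [hdp H]].
  assert (hp : 0 < Rmin d (Rmin (x - a) (b - x))) by (apply Rmin_pos; [lra| apply Rmin_pos; lra]).
  exists (mkposreal _ hp). intros h hh hlt. simpl in hlt.
  pose proof (Rmin_l d (Rmin (x - a) (b - x))).
  pose proof (Rmin_r d (Rmin (x - a) (b - x))).
  pose proof (Rmin_l (x - a) (b - x)). pose proof (Rmin_r (x - a) (b - x)).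
  apply H; [auto|lra|]. revert hlt; unfold Rabs; destruct Rcase_abs; intros; lra.
Qed.

Lemma mvt_within f df x y : x < y ->
  (forall s, x <= s <= y -> cont_within x y f s) ->
  (forall s, x < s < y -> derivable_pt_lim f s (df s)) ->
  exists c, x < c < y /\ f y - f x = df c * (y - x).
Proof.
  intros hxy hc hd.
  set (g := fun s => f (clamp x y s)).
  assert (hg : forall s, x < s < y -> derivable_pt_lim g s (df s)).
  { intros s hs. apply (derivable_pt_lim_locally_ext f g s x y); auto.
    intros z hz. unfold g. rewrite clamp_id by lra; reflexivity. }
  assert (pr1 : forall c, x < c < y -> derivable_pt g c) by (intros c hcy; exists (df c); exact (hg c hcy)).
  assert (pr2 : forall c, x < c < y -> derivable_pt id c) by (intros c _; apply derivable_pt_id).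
  destruct (MVT g id x y pr1 pr2 hxy) as [c [P E]].
  { intros; apply cont_within_clamp; auto; lra. }
  { intros; apply derivable_continuous_pt, derivable_pt_id. }
  exists c; split; auto.
  rewrite (derive_pt_eq_0 g c (df c) (pr1 c P) (hg c P)) in E.
  rewrite (derive_pt_eq_0 id c 1 (pr2 c P) (derivable_pt_lim_id c)) in E.
  unfold g, id in E. rewrite !clamp_id in E; lra.
Qed.

Lemma mvt_quotient (f df : R -> R) r h : h <> 0 ->
  (forall s, Rmin r (r+h) <= s <= Rmax r (r+h) -> derivable_pt_lim f s (df s)) ->
  exists xi, Rabs (xi - r) < Rabs h /\ (f (r + h) - f r) / h = df xi.
Proof.
  intros hh hd. destruct (Rle_dec 0 h).
  - destruct (MVT_cor2 f df r (r+h) ltac:(lra)) as [xi [E hxi]].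
    { intros c hc; apply hd. rewrite Rmin_left, Rmax_right by lra. auto. }
    exists xi; split; [rewrite !Rabs_right; lra|].
    replace (r + h - r) with h in E by ring. rewrite E; field; auto.
  - destruct (MVT_cor2 f df (r+h) r ltac:(lra)) as [xi [E hxi]].
    { intros c hc; apply hd. rewrite Rmin_right, Rmax_left by lra. auto. }
    exists xi; split; [rewrite Rabs_left, Rabs_left1; lra|].
    replace (r - (r + h)) with (-h) in E by ring.
    replace (f (r + h) - f r) with (- (f r - f (r + h))) by ring. rewrite E; field; auto.
Qed.

Lemma fermat_interior_max f x l a b : a < x < b -> derivable_pt_lim f x l ->
  (forall s, a <= s <= b -> f s <= f x) -> l = 0.
Proof.
  intros hx hd hm. destruct (Rtotal_order l 0) as [hl|[hl|hl]]; auto; exfalso.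
  - destruct (hd (- l) ltac:(lra)) as [d H].
    set (h := - Rmin (d/2) ((x-a)/2)).
    assert (hpos : 0 < Rmin (d/2) ((x-a)/2)) by (apply Rmin_pos; pose proof (cond_pos d); lra).
    pose proof (Rmin_l (d/2) ((x-a)/2)). pose proof (Rmin_r (d/2) ((x-a)/2)).
    assert (ha : Rabs h < d) by (unfold h; rewrite Rabs_Ropp, Rabs_right; pose proof (cond_pos d); lra).
    specialize (H h ltac:(unfold h; lra) ha). specialize (hm (x + h) ltac:(unfold h; lra)).
    assert (E : (f (x + h) - f x) / h * h = f (x + h) - f x) by (field; unfold h; lra).
    assert ((f (x + h) - f x) / h >= 0) by (assert (h < 0) by (unfold h; lra); nra).
    revert H; unfold Rabs; destruct Rcase_abs; intros; lra.
  - destruct (hd l ltac:(lra)) as [d H].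
    assert (hpos : 0 < Rmin (d/2) ((b-x)/2)) by (apply Rmin_pos; pose proof (cond_pos d); lra).
    pose proof (Rmin_l (d/2) ((b-x)/2)). pose proof (Rmin_r (d/2) ((b-x)/2)).
    set (h := Rmin (d/2) ((b-x)/2)) in *.
    assert (ha : Rabs h < d) by (rewrite Rabs_right; pose proof (cond_pos d); lra).
    specialize (H h ltac:(lra) ha). specialize (hm (x + h) ltac:(lra)).
    assert (E : (f (x + h) - f x) / h * h = f (x + h) - f x) by (field; lra).
    assert ((f (x + h) - f x) / h <= 0) by nra.
    revert H; unfold Rabs; destruct Rcase_abs; intros; lra.
Qed.

Lemma derivable_pt_lim_lincomb (f g : R -> R) x lf lg al be :
  derivable_pt_lim f x lf -> derivable_pt_lim g x lg ->
  derivable_pt_lim (fun s => al * f s + be * g s) x (al * lf + be * lg).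
Proof.
  intros h1 h2. apply (derivable_pt_lim_plus (fun s => al * f s) (fun s => be * g s)).
  - exact (derivable_pt_lim_scal f al x lf h1).
  - exact (derivable_pt_lim_scal g be x lg h2).
Qed.

(** * Second-order linear ODEs on an interval *)

(* Maximum principle: if y'' = p y' + c y with c > 0, y'(a) = 0 and y(b) = 0,
   then y <= 0.  At a positive maximum M (necessarily M < b) we get y'(M) = 0
   and y''(M) = c y > 0, so y increases just to the right of M. *)
Lemma maximum_principle a b (y y1 y2 p c : R -> R) : a < b ->
  (forall s, a <= s <= b -> cont_within a b y s) ->
  (forall s, a <= s <= b -> cont_within a b y1 s) ->
  (forall s, a <= s <= b -> cont_within a b y2 s) ->
  (forall s, a < s < b -> derivable_pt_lim y s (y1 s)) ->
  (forall s, a < s < b -> derivable_pt_lim y1 s (y2 s)) ->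
  y1 a = 0 -> y b = 0 ->
  (forall s, a <= s <= b -> y2 s = p s * y1 s + c s * y s) ->
  (forall s, a <= s <= b -> 0 < c s) ->
  forall s, a <= s <= b -> y s <= 0.
Proof.
  intros hab hy hy1 hy2 hd hd1 hya hyb hode hc s0 hs0.
  destruct (Rle_dec (y s0) 0) as [|hpos]; auto. exfalso.
  destruct (extreme_value_within a b y ltac:(lra) hy) as [M [hM HM]].
  assert (hyM : y M > 0) by (specialize (HM s0 hs0); lra).
  assert (hMb : M < b) by (destruct (Req_dec M b); [subst; lra| lra]).
  assert (hy1M : y1 M = 0).
  { destruct (Req_dec M a) as [->|hMa]; auto.
    assert (a < M) by (destruct hM as [[h|h] _]; [exact h| congruence]).
    apply (fermat_interior_max y M (y1 M) a b); auto; lra. }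
  assert (hy2M : y2 M > 0).
  { rewrite hode, hy1M by lra. specialize (hc M hM). nra. }
  destruct (hy2 M hM (y2 M) hy2M) as [del [hdel Hd]].
  set (eta := Rmin (del/2) ((b - M)/2)).
  assert (he : 0 < eta) by (apply Rmin_pos; lra).
  assert (he1 : eta <= del/2) by apply Rmin_l.
  assert (he2 : eta <= (b-M)/2) by apply Rmin_r.
  assert (convex_right : forall s, M <= s <= M + eta -> y2 s > 0).
  { intros s hs. specialize (Hd s ltac:(lra) ltac:(rewrite Rabs_right; lra)).
    revert Hd. unfold Rabs; destruct Rcase_abs; intros; lra. }
  destruct (mvt_within y y1 M (M + eta) ltac:(lra)) as [xi [hxi E1]].
  { intros s hs. apply (cont_within_sub a b); try lra. apply hy; lra. }
  { intros s hs. apply hd; lra. }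
  destruct (mvt_within y1 y2 M xi ltac:(lra)) as [ze [hze E2]].
  { intros s hs. apply (cont_within_sub a b); try lra. apply hy1; lra. }
  { intros s hs. apply hd1; lra. }
  specialize (convex_right ze ltac:(lra)).
  assert (y1 xi > 0) by nra.
  specialize (HM (M + eta) ltac:(lra)). nra.
Qed.

(* Applying the maximum principle to y and -y: the only solution of the
   mixed Neumann-Dirichlet problem with c > 0 is zero. *)
Lemma mixed_problem_trivial a b (y y1 y2 p c : R -> R) : a < b ->
  (forall s, a <= s <= b -> cont_within a b y s) ->
  (forall s, a <= s <= b -> cont_within a b y1 s) ->
  (forall s, a <= s <= b -> cont_within a b y2 s) ->
  (forall s, a < s < b -> derivable_pt_lim y s (y1 s)) ->
  (forall s, a < s < b -> derivable_pt_lim y1 s (y2 s)) ->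
  y1 a = 0 -> y b = 0 ->
  (forall s, a <= s <= b -> y2 s = p s * y1 s + c s * y s) ->
  (forall s, a <= s <= b -> 0 < c s) ->
  forall s, a <= s <= b -> y s = 0.
Proof.
  intros hab hy hy1 hy2 hd hd1 hya hyb hode hc s hs.
  assert (hle := maximum_principle a b y y1 y2 p c hab hy hy1 hy2 hd hd1 hya hyb hode hc s hs).
  assert (hge : - y s <= 0).
  { apply (maximum_principle a b (fun s => - y s) (fun s => - y1 s) (fun s => - y2 s) p c);
      auto; intros; try apply cont_within_opp; auto; try apply derivable_pt_lim_opp; auto.
    - rewrite hya; ring.
    - rewrite hyb; ring.
    - rewrite hode; auto; ring. }
  lra.
Qed.

Lemma energy_growth_bound (Y Y1 P Q K : R) : Rabs P <= K -> Rabs Q <= K ->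
  2 * Y * Y1 + 2 * Y1 * (P * Y1 + Q * Y) <= (1 + 3 * K) * (Y * Y + Y1 * Y1).
Proof.
  intros hp hq.
  assert (hP : - K <= P <= K) by (revert hp; unfold Rabs; destruct Rcase_abs; intros; lra).
  assert (hQ : - K <= Q <= K) by (revert hq; unfold Rabs; destruct Rcase_abs; intros; lra).
  assert (hdiff : 0 <= (Y - Y1) * (Y - Y1)) by apply Rle_0_sqr.
  assert (hsum : 0 <= (Y + Y1) * (Y + Y1)) by apply Rle_0_sqr.
  assert (hY1 : 0 <= Y1 * Y1) by apply Rle_0_sqr.
  assert (hP' : 0 <= (K - P) * (Y1 * Y1)) by (apply Rmult_le_pos; lra).
  assert (2 * Q * (Y * Y1) <= K * (Y * Y + Y1 * Y1)).
  { destruct (Rle_dec 0 (Y * Y1)).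
    - assert (0 <= (K - Q) * (Y * Y1)) by (apply Rmult_le_pos; lra). nra.
    - assert (0 <= (K + Q) * (- (Y * Y1))) by (apply Rmult_le_pos; lra). nra. }
  nra.
Qed.

Lemma weighted_energy_deriv (y y1 : R -> R) y2x C x :
  derivable_pt_lim y x (y1 x) -> derivable_pt_lim y1 x y2x ->
  derivable_pt_lim (fun s => (y s * y s + y1 s * y1 s) * exp (- C * s)) x
    ((2 * y x * y1 x + 2 * y1 x * y2x) * exp (- C * x)
     - C * ((y x * y x + y1 x * y1 x) * exp (- C * x))).
Proof.
  intros hd hd1.
  assert (he : derivable_pt_lim (fun s => exp (- C * s)) x (exp (- C * x) * (- C))).
  { apply is_derive_Reals. auto_derive; auto. ring. }
  assert (hyy := derivable_pt_lim_mult y y x _ _ hd hd).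
  assert (hyy1 := derivable_pt_lim_mult y1 y1 x _ _ hd1 hd1).
  assert (hm := derivable_pt_lim_mult _ _ x _ _ (derivable_pt_lim_plus _ _ x _ _ hyy hyy1) he).
  unfold mult_fct, plus_fct in hm.
  replace ((2 * y x * y1 x + 2 * y1 x * y2x) * exp (- C * x)
            - C * ((y x * y x + y1 x * y1 x) * exp (- C * x)))
    with ((y1 x * y x + y x * y1 x + (y2x * y1 x + y1 x * y2x)) * exp (- C * x) +
          (y x * y x + y1 x * y1 x) * (exp (- C * x) * - C)) by ring.
  exact hm.
Qed.

(* Uniqueness for the initial value problem: a solution of
   y'' = p y' + q y with bounded coefficients and y(a) = y'(a) = 0 vanishes,
   because G = (y^2 + y'^2) e^{-Cs} is non-increasing for C = 1 + 3K. *)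
Lemma ivp_uniqueness a b (y y1 y2 p q : R -> R) K : a < b -> 0 <= K ->
  (forall s, a <= s <= b -> cont_within a b y s) ->
  (forall s, a <= s <= b -> cont_within a b y1 s) ->
  (forall s, a < s < b -> derivable_pt_lim y s (y1 s)) ->
  (forall s, a < s < b -> derivable_pt_lim y1 s (y2 s)) ->
  (forall s, a < s < b -> y2 s = p s * y1 s + q s * y s) ->
  (forall s, a < s < b -> Rabs (p s) <= K /\ Rabs (q s) <= K) ->
  y a = 0 -> y1 a = 0 -> forall s, a <= s <= b -> y s = 0.
Proof.
  intros hab hK hy hy1 hd hd1 hode hpq hya hy1a s hs.
  set (C := 1 + 3 * K).
  set (G := fun s => (y s * y s + y1 s * y1 s) * exp (- C * s)).
  set (dG := fun s => (2 * y s * y1 s + 2 * y1 s * y2 s) * exp (- C * s)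
                      - C * ((y s * y s + y1 s * y1 s) * exp (- C * s))).
  assert (hG : forall s, a <= s <= b -> cont_within a b G s).
  { intros x hx. apply clamp_cont_within; auto. unfold G.
    assert (h1 := cont_within_clamp a b y x ltac:(lra) hx (hy x hx)).
    assert (h2 := cont_within_clamp a b y1 x ltac:(lra) hx (hy1 x hx)).
    apply continuity_pt_mult.
    - apply continuity_pt_plus; apply continuity_pt_mult; auto.
    - apply (continuity_pt_comp (fun s => - C * clamp a b s) exp).
      + apply continuity_pt_scal, continuity_pt_clamp; lra.
      + apply derivable_continuous_pt, derivable_pt_exp. }
  assert (hdG : forall s, a < s < b -> dG s <= 0).
  { intros c hc. unfold dG. rewrite hode by lra. destruct (hpq c hc) as [hp hq].
    assert (hex := exp_pos (- C * c)).
    assert (hE := energy_growth_bound (y c) (y1 c) (p c) (q c) K hp hq). fold C in hE.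
    nra. }
  destruct (Req_dec s a) as [->|hsa]; auto.
  destruct (mvt_within G dG a s ltac:(lra)) as [c [hc E]].
  { intros x hx. apply (cont_within_sub a b); try lra. apply hG; lra. }
  { intros x hx. apply weighted_energy_deriv; [apply hd| apply hd1]; lra. }
  assert (hGs : G s <= 0).
  { assert (G a = 0) by (unfold G; rewrite hya, hy1a; ring).
    assert (dG c <= 0) by (apply hdG; lra). nra. }
  unfold G in hGs. assert (hex := exp_pos (- C * s)).
  assert (y s * y s + y1 s * y1 s <= 0) by nra. nra.
Qed.

(** * Integrals depending on a parameter *)

Lemma ex_RInt_continuity_pt (g : R -> R) a b : (forall t, continuity_pt g t) -> ex_RInt g a b.
Proof.
  intros h. apply (@ex_RInt_continuous R_CompleteNormedModule).
  intros; apply continuity_pt_filterlim; auto.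
Qed.

(* [RInt_ext] and [ex_RInt_ext] for real-valued functions, so that pointwise
   side goals are equations in R that [ring] and [field] can solve. *)
Lemma RInt_ext_R (f g : R -> R) a b :
  (forall x, Rmin a b < x < Rmax a b -> f x = g x) -> RInt f a b = RInt g a b.
Proof. apply RInt_ext. Qed.

Lemma ex_RInt_ext_R (f g : R -> R) a b :
  (forall x, Rmin a b < x < Rmax a b -> f x = g x) -> ex_RInt f a b -> ex_RInt g a b.
Proof. apply ex_RInt_ext. Qed.

Lemma ex_RInt_lincomb (f g : R -> R) a b al be : ex_RInt f a b -> ex_RInt g a b ->
  ex_RInt (fun t => al * f t + be * g t) a b.
Proof.
  intros hf hg. exact (ex_RInt_plus _ _ _ _ (ex_RInt_scal _ _ _ al hf) (ex_RInt_scal _ _ _ be hg)).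
Qed.

Lemma RInt_lincomb (f g : R -> R) a b al be : ex_RInt f a b -> ex_RInt g a b ->
  RInt (fun t => al * f t + be * g t) a b = al * RInt f a b + be * RInt g a b.
Proof.
  intros hf hg.
  assert (E := RInt_plus (fun t => scal al (f t)) (fun t => scal be (g t)) a b
    (ex_RInt_scal _ _ _ _ hf) (ex_RInt_scal _ _ _ _ hg)).
  rewrite (RInt_scal f), (RInt_scal g) in E by auto. exact E.
Qed.

Lemma ex_RInt_lincomb3 (f g k : R -> R) a b al be ga :
  ex_RInt f a b -> ex_RInt g a b -> ex_RInt k a b ->
  ex_RInt (fun t => al * f t + be * g t + ga * k t) a b.
Proof.
  intros hf hg hk.
  apply (ex_RInt_ext_R (fun t => 1 * (al * f t + be * g t) + ga * k t)); [intros; ring|].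
  apply ex_RInt_lincomb; auto. apply ex_RInt_lincomb; auto.
Qed.

Lemma RInt_lincomb3 (f g k : R -> R) a b al be ga :
  ex_RInt f a b -> ex_RInt g a b -> ex_RInt k a b ->
  RInt (fun t => al * f t + be * g t + ga * k t) a b
  = al * RInt f a b + be * RInt g a b + ga * RInt k a b.
Proof.
  intros hf hg hk.
  rewrite <- (RInt_lincomb f g a b al be hf hg).
  rewrite <- (Rmult_1_l (RInt (fun t => al * f t + be * g t) a b)).
  rewrite <- (RInt_lincomb _ k a b 1 ga); [|apply ex_RInt_lincomb|]; auto.
  apply RInt_ext_R; intros; ring.
Qed.

(* A function jointly continuous on the strip is continuous in r uniformly
   for t in a compact interval [c,d] (a compactness argument on [c,d]
   via the least upper bound of the good right endpoints). *)
Lemma cont_strip_uniform a b (f : R -> R -> R) : cont_strip a b f -> forall r0, a <= r0 <= b ->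
  forall c d, c <= d -> forall eps, 0 < eps -> exists del, 0 < del /\
  forall r, a <= r <= b -> Rabs (r - r0) < del -> forall t, c <= t <= d ->
    Rabs (f r t - f r0 t) < eps.
Proof.
  intros hf r0 hr0 c d hcd eps heps.
  set (E := fun x => c <= x <= d /\ exists del, 0 < del /\
     forall r, a <= r <= b -> Rabs (r - r0) < del -> forall t, c <= t <= x ->
       Rabs (f r t - f r0 t) < eps).
  assert (Ec : E c).
  { split; [lra|]. destruct (hf r0 c hr0 eps heps) as [del [hdel H]].
    exists del; split; auto. intros r hr hrr t ht.
    replace t with c by lra. apply H; auto. rewrite Rminus_diag, Rabs_R0; auto. }
  assert (hb : bound E) by (exists d; intros x [hx _]; lra).
  destruct (completeness E hb (ex_intro _ c Ec)) as [s [hub hlub]].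
  assert (hcs : c <= s) by (apply hub; auto).
  assert (hsd : s <= d) by (apply hlub; intros x [hx _]; lra).
  destruct (hf r0 s hr0 (eps/2) ltac:(lra)) as [d1 [hd1 H1]].
  assert (hx : exists x, E x /\ s - d1 < x).
  { destruct (classic (exists x, E x /\ s - d1 < x)) as [h|h]; auto.
    exfalso. assert (s <= s - d1); [|lra]. apply hlub. intros x hx.
    destruct (Rle_dec x (s - d1)); auto. exfalso; apply h; exists x; split; auto; lra. }
  destruct hx as [x [[hxr [dx [hdx Hx]]] hxs]].
  assert (hxs' : x <= s) by (apply hub; split; auto; exists dx; auto).
  set (z := Rmin d (s + d1/2)).
  assert (Ez : E z).
  { split; [unfold z; split; [apply Rmin_glb; lra| apply Rmin_l]|].
    exists (Rmin dx d1); split; [apply Rmin_pos; auto|].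
    intros r hr hrr t ht.
    assert (hrr1 : Rabs (r - r0) < dx) by (eapply Rlt_le_trans; [exact hrr| apply Rmin_l]).
    assert (hrr2 : Rabs (r - r0) < d1) by (eapply Rlt_le_trans; [exact hrr| apply Rmin_r]).
    destruct (Rle_dec t x); [apply Hx; auto; lra|].
    assert (hz : z <= s + d1/2) by apply Rmin_r.
    assert (hts : Rabs (t - s) < d1) by (unfold Rabs; destruct Rcase_abs; lra).
    assert (A1 := H1 r t hr hrr2 hts).
    assert (A2 := H1 r0 t hr0 ltac:(rewrite Rminus_diag, Rabs_R0; auto) hts).
    replace (f r t - f r0 t) with ((f r t - f r0 s) - (f r0 t - f r0 s)) by ring.
    eapply Rle_lt_trans; [apply Rabs_triang|]. rewrite Rabs_Ropp. lra. }
  assert (hzs : z <= s) by (apply hub; auto).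
  assert (hz : z = d).
  { unfold z in *. destruct (Rle_dec d (s + d1/2)).
    - rewrite Rmin_left; lra.
    - rewrite Rmin_right in hzs; lra. }
  rewrite hz in Ez. destruct Ez as [_ [del [hdel H]]]. exists del; split; auto.
Qed.

Section ParameterIntegral.

Variables (a b c d : R) (w : R -> R).
Hypothesis hcd : c <= d.
Hypothesis hw : forall t, continuity_pt w t.
Hypothesis hw1 : forall t, Rabs (w t) <= 1.

Lemma param_RInt_cont (G : R -> R -> R) :
  cont_strip a b G -> (forall r t, a <= r <= b -> continuity_pt (G r) t) ->
  forall r0, a <= r0 <= b -> cont_within a b (fun r => RInt (fun t => G r t * w t) c d) r0.
Proof.
  intros hG hGt r0 hr0 eps heps.
  assert (heps' : 0 < eps / (d - c + 1)) by (apply Rdiv_lt_0_compat; lra).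
  destruct (cont_strip_uniform a b G hG r0 hr0 c d hcd _ heps') as [del [hdel H]].
  exists del; split; auto. intros r hr hrr.
  assert (ex : forall r, a <= r <= b -> ex_RInt (fun t => G r t * w t) c d).
  { intros; apply ex_RInt_continuity_pt; intros; apply continuity_pt_mult; auto. }
  assert (Ed : RInt (fun t => G r t * w t) c d - RInt (fun t => G r0 t * w t) c d
     = RInt (fun t => 1 * (G r t * w t) + (-1) * (G r0 t * w t)) c d).
  { rewrite RInt_lincomb by auto. ring. }
  rewrite Ed.
  eapply Rle_lt_trans; [apply abs_RInt_le_const with (M := eps / (d - c + 1)); auto|].
  - apply ex_RInt_lincomb; auto.
  - intros t ht. replace (1 * (G r t * w t) + -1 * (G r0 t * w t)) with ((G r t - G r0 t) * w t) by ring.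
    rewrite Rabs_mult. specialize (H r hr hrr t ht). specialize (hw1 t).
    pose proof (Rabs_pos (G r t - G r0 t)). pose proof (Rabs_pos (w t)). nra.
  - assert (eps / (d - c + 1) * (d - c + 1) = eps) by (field; lra). nra.
Qed.

Lemma param_RInt_deriv (G0 G1 : R -> R -> R) :
  (forall r t, a < r < b -> derivable_pt_lim (fun s => G0 s t) r (G1 r t)) ->
  cont_strip a b G1 -> (forall r t, a <= r <= b -> continuity_pt (G0 r) t) ->
  (forall r t, a <= r <= b -> continuity_pt (G1 r) t) ->
  forall r, a < r < b -> derivable_pt_lim (fun s => RInt (fun t => G0 s t * w t) c d) r
     (RInt (fun t => G1 r t * w t) c d).
Proof.
  intros hd hG1 hG0t hG1t r hr eps heps.
  set (e' := eps / (2 * (d - c + 1))).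
  assert (he' : 0 < e') by (unfold e'; apply Rdiv_lt_0_compat; lra).
  destruct (cont_strip_uniform a b G1 hG1 r ltac:(lra) c d hcd e' he') as [del [hdel H]].
  assert (hp : 0 < Rmin del (Rmin (r - a) (b - r))) by (apply Rmin_pos; [lra|apply Rmin_pos; lra]).
  exists (mkposreal _ hp). intros h hh hlt. simpl in hlt.
  pose proof (Rmin_l del (Rmin (r - a) (b - r))). pose proof (Rmin_r del (Rmin (r - a) (b - r))).
  pose proof (Rmin_l (r - a) (b - r)). pose proof (Rmin_r (r - a) (b - r)).
  assert (hrh : a <= r + h <= b) by (revert hlt; unfold Rabs; destruct Rcase_abs; intros; lra).
  assert (ex0 : forall s, a <= s <= b -> ex_RInt (fun t => G0 s t * w t) c d).
  { intros; apply ex_RInt_continuity_pt; intros; apply continuity_pt_mult; auto. }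
  assert (ex1 : ex_RInt (fun t => G1 r t * w t) c d).
  { apply ex_RInt_continuity_pt; intros; apply continuity_pt_mult; auto; apply hG1t; lra. }
  set (q := fun t => (/h) * (G0 (r + h) t * w t) + (- / h) * (G0 r t * w t) + (-1) * (G1 r t * w t)).
  assert (Ed : (RInt (fun t => G0 (r + h) t * w t) c d - RInt (fun t => G0 r t * w t) c d) / h
               - RInt (fun t => G1 r t * w t) c d = RInt q c d).
  { unfold q. rewrite RInt_lincomb3 by (auto; apply ex0; lra). field; auto. }
  rewrite Ed.
  eapply Rle_lt_trans; [apply abs_RInt_le_const with (M := e'); auto|].
  - apply ex_RInt_lincomb3; auto; apply ex0; lra.
  - intros t ht.
    replace (q t) with (((G0 (r + h) t - G0 r t) / h - G1 r t) * w t) by (unfold q; field; auto).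
    rewrite Rabs_mult.
    destruct (mvt_quotient (fun s => G0 s t) (fun s => G1 s t) r h hh) as [xi [hxi E]].
    { intros s hs. apply hd.
      assert (Rmin r (r + h) >= r - Rabs h) by (unfold Rmin, Rabs; destruct Rle_dec; destruct Rcase_abs; lra).
      assert (Rmax r (r + h) <= r + Rabs h) by (unfold Rmax, Rabs; destruct Rle_dec; destruct Rcase_abs; lra).
      lra. }
    rewrite E. assert (hxr : a <= xi <= b) by (revert hxi; unfold Rabs at 1; destruct Rcase_abs; intros; lra).
    specialize (H xi hxr ltac:(lra) t ht). specialize (hw1 t).
    pose proof (Rabs_pos (G1 xi t - G1 r t)). pose proof (Rabs_pos (w t)).
    apply Rle_trans with (e' * 1); [apply Rmult_le_compat; lra | lra].
  - assert (e' * (2 * (d - c + 1)) = eps) by (unfold e'; field; lra). nra.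
Qed.

End ParameterIntegral.

(** * Fourier analysis of 2π-periodic functions *)

Lemma derive_cos_mul k x : derivable_pt_lim (fun t => cos (k * t)) x (- (k * sin (k * x))).
Proof. apply is_derive_Reals. auto_derive; auto. ring. Qed.

Lemma derive_sin_mul k x : derivable_pt_lim (fun t => sin (k * t)) x (k * cos (k * x)).
Proof. apply is_derive_Reals. auto_derive; auto. ring. Qed.

Lemma continuity_cos_mul k t : continuity_pt (fun t => cos (k * t)) t.
Proof. apply derivable_continuous_pt. eexists. apply derive_cos_mul. Qed.

Lemma continuity_sin_mul k t : continuity_pt (fun t => sin (k * t)) t.
Proof. apply derivable_continuous_pt. eexists. apply derive_sin_mul. Qed.

Lemma cos_mul_period (k : nat) t : cos (INR k * (t + 2 * PI)) = cos (INR k * t).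
Proof. replace (INR k * (t + 2 * PI)) with (INR k * t + 2 * INR k * PI) by ring. apply cos_period. Qed.

Lemma sin_mul_period (k : nat) t : sin (INR k * (t + 2 * PI)) = sin (INR k * t).
Proof. replace (INR k * (t + 2 * PI)) with (INR k * t + 2 * INR k * PI) by ring. apply sin_period. Qed.

Lemma periodic_deriv (f f1 : R -> R) T : (forall t, f (t + T) = f t) ->
  (forall t, derivable_pt_lim f t (f1 t)) -> forall t, f1 (t + T) = f1 t.
Proof.
  intros hp hd t. apply (uniqueness_limite f t); auto.
  intros eps he. destruct (hd (t + T) eps he) as [d H]. exists d. intros h hh hlt.
  specialize (H h hh hlt). replace (t + T + h) with ((t + h) + T) in H by ring.
  rewrite !hp in H. exact H.
Qed.

Lemma continuity_of_deriv (f f1 : R -> R) t : derivable_pt_lim f t (f1 t) -> continuity_pt f t.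
Proof. intros hd. apply derivable_continuous_pt. exists (f1 t). exact hd. Qed.

(* Integrating by parts twice over a period: for 2π-periodic C^2 functions
   f and w, ∫ f'' w = ∫ f w'', since (f' w - f w')' = f'' w - f w''. *)
Lemma RInt_second_deriv_symm (f f1 f2 w w1 w2 : R -> R) :
  (forall t, derivable_pt_lim f t (f1 t)) -> (forall t, derivable_pt_lim f1 t (f2 t)) ->
  (forall t, derivable_pt_lim w t (w1 t)) -> (forall t, derivable_pt_lim w1 t (w2 t)) ->
  (forall t, continuity_pt f2 t) -> (forall t, continuity_pt w2 t) ->
  (forall t, f (t + 2 * PI) = f t) -> (forall t, w (t + 2 * PI) = w t) ->
  RInt (fun t => f2 t * w t) 0 (2 * PI) = RInt (fun t => f t * w2 t) 0 (2 * PI) :> R.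
Proof.
  intros hf hf1 hw hw1 cf2 cw2 pf pw.
  set (P := fun t => f1 t * w t - f t * w1 t).
  set (dP := fun t => 1 * (f2 t * w t) + (-1) * (f t * w2 t)).
  assert (cf : forall t, continuity_pt f t) by (intros; eapply continuity_of_deriv, hf).
  assert (cw : forall t, continuity_pt w t) by (intros; eapply continuity_of_deriv, hw).
  assert (hdP : forall t, is_derive P t (dP t)).
  { intros t. apply is_derive_Reals.
    assert (H := derivable_pt_lim_minus _ _ t _ _
      (derivable_pt_lim_mult f1 w t _ _ (hf1 t) (hw t))
      (derivable_pt_lim_mult f w1 t _ _ (hf t) (hw1 t))).
    unfold P, dP. unfold minus_fct, mult_fct in H.
    replace (1 * (f2 t * w t) + -1 * (f t * w2 t))
      with (f2 t * w t + f1 t * w1 t - (f1 t * w1 t + f t * w2 t)) by ring.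
    exact H. }
  assert (cdP : forall t, continuity_pt dP t).
  { intros t. unfold dP. apply (continuity_pt_plus (fun t => 1 * (f2 t * w t)) (fun t => -1 * (f t * w2 t)));
      apply continuity_pt_scal; apply continuity_pt_mult; auto. }
  assert (hi := is_RInt_derive P dP 0 (2 * PI) (fun t _ => hdP t)
    (fun t _ => proj1 (continuity_pt_filterlim _ _) (cdP t))).
  apply is_RInt_unique in hi. unfold dP in hi.
  rewrite RInt_lincomb in hi by (apply ex_RInt_continuity_pt; intros; apply continuity_pt_mult; auto).
  assert (hP : P (2 * PI) = P 0).
  { unfold P. replace (2 * PI) with (0 + 2 * PI) by ring.
    rewrite pf, pw, (periodic_deriv f f1 _ pf hf), (periodic_deriv w w1 _ pw hw). reflexivity. }
  rewrite hP in hi. unfold minus, plus, opp in hi; simpl in hi. lra.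
Qed.

Definition trig_mode (K : R) (w : R -> R) : Prop :=
  (exists w1, (forall t, derivable_pt_lim w t (w1 t)) /\
              (forall t, derivable_pt_lim w1 t (- K ^ 2 * w t))) /\
  (forall t, w (t + 2 * PI) = w t) /\ (forall t, Rabs (w t) <= 1).

Lemma trig_mode_cos (k : nat) : trig_mode (INR k) (fun t => cos (INR k * t)).
Proof.
  split; [|split; [apply cos_mul_period| intros; apply Rabs_le, COS_bound]].
  exists (fun t => - (INR k * sin (INR k * t))). split; [apply derive_cos_mul|].
  intros t. apply is_derive_Reals. auto_derive; auto. ring.
Qed.

Lemma trig_mode_sin (k : nat) : trig_mode (INR k) (fun t => sin (INR k * t)).
Proof.
  split; [|split; [apply sin_mul_period| intros; apply Rabs_le, SIN_bound]].
  exists (fun t => INR k * cos (INR k * t)). split; [apply derive_sin_mul|].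
  intros t. apply is_derive_Reals. auto_derive; auto. ring.
Qed.

Lemma trig_mode_continuous K w : trig_mode K w -> forall t, continuity_pt w t.
Proof. intros [[w1 [hw _]] _] t. eapply continuity_of_deriv, hw. Qed.

Lemma mode_coeff_second_deriv K w (f f1 f2 : R -> R) : trig_mode K w ->
  (forall t, derivable_pt_lim f t (f1 t)) -> (forall t, derivable_pt_lim f1 t (f2 t)) ->
  (forall t, continuity_pt f2 t) -> (forall t, f (t + 2 * PI) = f t) ->
  RInt (fun t => f2 t * w t) 0 (2 * PI) = - K ^ 2 * RInt (fun t => f t * w t) 0 (2 * PI) :> R.
Proof.
  intros hm hf hf1 cf2 pf.
  assert (cw := trig_mode_continuous K w hm).
  destruct hm as [[w1 [hw hw1]] [pw _]].
  rewrite (RInt_second_deriv_symm f f1 f2 w w1 (fun t => - K ^ 2 * w t)); auto.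
  - assert (ex : ex_RInt (fun t => f t * w t) 0 (2 * PI)).
    { apply ex_RInt_continuity_pt; intros; apply continuity_pt_mult; auto.
      eapply continuity_of_deriv, hf. }
    assert (E := RInt_scal _ 0 (2 * PI) (- K ^ 2) ex).
    unfold scal in E; simpl in E; unfold mult in E; simpl in E.
    replace (- K ^ 2) with (- (K * (K * 1))) by ring.
    rewrite <- E. apply RInt_ext_R. intros; ring.
  - intros; apply continuity_pt_scal; auto.
Qed.

Lemma trig_integrals (k : nat) : (1 <= k)%nat ->
  RInt (fun t => cos (INR k * t)) 0 (2 * PI) = 0 :> R /\
  RInt (fun t => sin (INR k * t)) 0 (2 * PI) = 0 :> R.
Proof.
  intros hk. assert (hK : INR k <> 0) by (apply not_0_INR; lia).
  assert (e0 : INR k * (2 * PI) = INR k * (0 + 2 * PI)) by (f_equal; ring).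
  split.
  - assert (hd : forall x, is_derive (fun t => sin (INR k * t) / INR k) x (cos (INR k * x))).
    { intros x. auto_derive; auto. field; auto. }
    assert (hi := is_RInt_derive _ _ 0 (2 * PI) (fun x _ => hd x)
      (fun x _ => proj1 (continuity_pt_filterlim _ _) (continuity_cos_mul (INR k) x))).
    apply is_RInt_unique in hi. rewrite hi. unfold minus, plus, opp; simpl.
    rewrite e0, sin_mul_period. field; auto.
  - assert (hd : forall x, is_derive (fun t => - cos (INR k * t) / INR k) x (sin (INR k * x))).
    { intros x. auto_derive; auto. field; auto. }
    assert (hi := is_RInt_derive _ _ 0 (2 * PI) (fun x _ => hd x)
      (fun x _ => proj1 (continuity_pt_filterlim _ _) (continuity_sin_mul (INR k) x))).
    apply is_RInt_unique in hi. rewrite hi. unfold minus, plus, opp; simpl.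
    rewrite e0, cos_mul_period. field; auto.
Qed.

Lemma RInt_chasles_cont (f : R -> R) a b c : (forall t, continuity_pt f t) ->
  RInt f a c = RInt f a b + RInt f b c.
Proof.
  intros hc. assert (ex : forall u v, ex_RInt f u v) by (intros; apply ex_RInt_continuity_pt; auto).
  rewrite <- (RInt_Chasles f a b c (ex _ _) (ex _ _)). reflexivity.
Qed.

Lemma RInt_periodic_shift (f : R -> R) c : (forall t, continuity_pt f t) ->
  (forall t, f (t + 2 * PI) = f t) -> RInt f 0 (2 * PI) = RInt f c (c + 2 * PI).
Proof.
  intros hc hp.
  assert (ex : forall u v, ex_RInt f u v) by (intros; apply ex_RInt_continuity_pt; auto).
  assert (E3 := RInt_comp_lin f 1 (2 * PI) 0 c).
  replace (1 * 0 + 2 * PI) with (2 * PI) in E3 by ring.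
  replace (1 * c + 2 * PI) with (c + 2 * PI) in E3 by ring.
  specialize (E3 (ex _ _)).
  assert (E4 : RInt f (2 * PI) (c + 2 * PI) = RInt f 0 c).
  { rewrite <- E3. apply RInt_ext_R. intros x _. change (1 * f (1 * x + 2 * PI) = f x).
    replace (1 * x + 2 * PI) with (x + 2 * PI) by ring. rewrite hp; ring. }
  rewrite (RInt_chasles_cont f c (2 * PI) (c + 2 * PI) hc),
          (RInt_chasles_cont f 0 c (2 * PI) hc), E4. apply Rplus_comm.
Qed.

(* The cosine bump (1 + cos s)/2: its powers are positive trigonometric
   polynomials concentrating at s = 0 (modulo 2π). *)
Definition cos_bump (s : R) : R := (1 + cos s) / 2.

Lemma cos_bump_nonneg s : 0 <= cos_bump s.
Proof. unfold cos_bump. pose proof (COS_bound s). lra. Qed.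

Lemma cos_bump_period s : cos_bump (s - 2 * PI) = cos_bump s.
Proof.
  unfold cos_bump. replace s with (s - 2 * PI + 2 * INR 1 * PI) at 2 by (simpl; ring).
  rewrite cos_period. reflexivity.
Qed.

Lemma continuity_bump_kernel x0 n c t :
  continuity_pt (fun t => cos_bump (x0 - t) ^ n * cos (c * (x0 - t))) t.
Proof.
  apply (proj2 (continuity_pt_filterlim _ _)).
  change (continuous (fun t => cos_bump (x0 - t) ^ n * cos (c * (x0 - t))) t).
  apply (ex_derive_continuous (K:=R_AbsRing) (V:=R_NormedModule)). unfold cos_bump. auto_derive; auto.
Qed.

Lemma continuity_bump_pow x0 n t : continuity_pt (fun t => cos_bump (x0 - t) ^ n) t.
Proof.
  apply (proj2 (continuity_pt_filterlim _ _)).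
  change (continuous (fun t => cos_bump (x0 - t) ^ n) t).
  apply (ex_derive_continuous (K:=R_AbsRing) (V:=R_NormedModule)). unfold cos_bump. auto_derive; auto.
Qed.

Lemma cos_bump_far eta s : 0 < eta < PI -> eta <= Rabs s <= PI -> cos_bump s <= cos_bump eta.
Proof.
  intros he hs. unfold cos_bump.
  assert (cos s <= cos eta); [|lra].
  replace (cos s) with (cos (Rabs s)) by (unfold Rabs; destruct Rcase_abs; auto using cos_neg).
  destruct (Req_dec eta (Rabs s)) as [<-|hne]; [lra|].
  apply Rlt_le, cos_decreasing_1; lra.
Qed.

Lemma cos_bump_near eta s : 0 < eta < PI -> Rabs s <= eta -> cos_bump eta <= cos_bump s.
Proof.
  intros he hs. unfold cos_bump.
  assert (cos eta <= cos s); [|lra].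
  replace (cos s) with (cos (Rabs s)) by (unfold Rabs; destruct Rcase_abs; auto using cos_neg).
  destruct (Req_dec eta (Rabs s)) as [<-|hne]; [lra|].
  pose proof (Rabs_pos s). apply Rlt_le, cos_decreasing_1; lra.
Qed.

Lemma cos_product J s : cos s * cos (J * s) = (cos ((J + 1) * s) + cos ((J - 1) * s)) / 2.
Proof.
  replace ((J + 1) * s) with (J * s + s) by ring. replace ((J - 1) * s) with (J * s - s) by ring.
  rewrite cos_plus, cos_minus. field.
Qed.

(* If h has mean zero and vanishing k-th Fourier coefficients for k >= 1, it
   is orthogonal to every cos_bump(x0 - t)^n cos(j (x0 - t)); by induction on
   n, using cos_bump(s) cos(js) = cos(js)/2 + cos((j+1)s)/4 + cos((j-1)s)/4. *)
Lemma bump_moments_vanish (h : R -> R) : (forall t, continuity_pt h t) ->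
  RInt h 0 (2 * PI) = 0 ->
  (forall k : nat, (1 <= k)%nat -> RInt (fun t => h t * cos (INR k * t)) 0 (2 * PI) = 0 /\
                          RInt (fun t => h t * sin (INR k * t)) 0 (2 * PI) = 0) ->
  forall x0 n j,
    RInt (fun t => h t * (cos_bump (x0 - t) ^ n * cos (INR j * (x0 - t)))) 0 (2 * PI) = 0 :> R.
Proof.
  intros hc h0 hk x0 n.
  assert (ex : forall n c, ex_RInt (fun t => h t * (cos_bump (x0 - t) ^ n * cos (c * (x0 - t)))) 0 (2 * PI)).
  { intros; apply ex_RInt_continuity_pt; intros; apply continuity_pt_mult; auto;
      apply continuity_bump_kernel. }
  induction n as [|n IHn]; intros j; [destruct j as [|j]|destruct j as [|j]].
  - transitivity (RInt h 0 (2 * PI)); [|exact h0]. apply RInt_ext_R. intros. simpl pow. rewrite Rmult_0_l, cos_0. ring.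
  - destruct (hk (S j) ltac:(lia)) as [e1 e2].
    rewrite (RInt_ext_R _ (fun t => cos (INR (S j) * x0) * (h t * cos (INR (S j) * t)) +
                                     sin (INR (S j) * x0) * (h t * sin (INR (S j) * t)))).
    + rewrite RInt_lincomb, e1, e2; [ring| |];
        apply ex_RInt_continuity_pt; intros; apply continuity_pt_mult; auto;
        [apply continuity_cos_mul| apply continuity_sin_mul].
    + intros t _. simpl pow.
      replace (INR (S j) * (x0 - t)) with (INR (S j) * x0 - INR (S j) * t) by ring.
      rewrite cos_minus. ring.
  - rewrite (RInt_ext_R _ (fun t => / 2 * (h t * (cos_bump (x0 - t) ^ n * cos (INR 0 * (x0 - t)))) +
                                   / 2 * (h t * (cos_bump (x0 - t) ^ n * cos (INR 1 * (x0 - t)))))).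
    + rewrite RInt_lincomb by apply ex. rewrite !IHn. ring.
    + intros t _. simpl pow. simpl INR. rewrite Rmult_0_l, Rmult_1_l, cos_0. unfold cos_bump. field.
  - rewrite (RInt_ext_R _ (fun t => / 2 * (h t * (cos_bump (x0 - t) ^ n * cos (INR (S j) * (x0 - t)))) +
                                   / 4 * (h t * (cos_bump (x0 - t) ^ n * cos (INR (S (S j)) * (x0 - t)))) +
                                   / 4 * (h t * (cos_bump (x0 - t) ^ n * cos (INR j * (x0 - t)))))).
    + rewrite RInt_lincomb3 by apply ex. rewrite !IHn. ring.
    + intros t _. simpl pow.
      assert (E := cos_product (INR (S j)) (x0 - t)).
      replace (INR (S j) + 1) with (INR (S (S j))) in E by (rewrite (S_INR (S j)); ring).
      replace (INR (S j) - 1) with (INR j) in E by (rewrite S_INR; ring).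
      unfold cos_bump.
      replace (cos (INR (S (S j)) * (x0 - t)))
        with (2 * (cos (x0 - t) * cos (INR (S j) * (x0 - t))) - cos (INR j * (x0 - t))) by lra.
      field.
Qed.

Lemma bump_far_bound (h : R -> R) x0 eta M n t : 0 < eta < PI ->
  eta <= Rabs (x0 - t) <= PI -> Rabs (h t) <= M ->
  Rabs (h t * cos_bump (x0 - t) ^ n) <= M * cos_bump eta ^ n.
Proof.
  intros he ht hM. rewrite Rabs_mult, (Rabs_right (cos_bump (x0 - t) ^ n))
    by (apply Rle_ge, pow_le, cos_bump_nonneg).
  apply Rmult_le_compat; auto using Rabs_pos, pow_le, cos_bump_nonneg.
  apply pow_incr. split; [apply cos_bump_nonneg| apply cos_bump_far; lra].
Qed.

Lemma bump_near_bound (h : R -> R) x0 eta d0 n t : 0 < eta < PI -> 0 <= d0 ->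
  Rabs (x0 - t) <= eta -> d0 <= h t -> d0 * cos_bump eta ^ n <= h t * cos_bump (x0 - t) ^ n.
Proof.
  intros he hd0 ht hh.
  apply Rmult_le_compat; auto using pow_le, cos_bump_nonneg.
  apply pow_incr. split; [apply cos_bump_nonneg| apply cos_bump_near; lra].
Qed.

Lemma continuity_bump_integrand (h : R -> R) x0 n : (forall t, continuity_pt h t) ->
  forall t, continuity_pt (fun t => h t * cos_bump (x0 - t) ^ n) t.
Proof. intros hc t. apply continuity_pt_mult; auto. apply continuity_bump_pow. Qed.

Lemma bump_far_integral (h : R -> R) x0 eta M n u v : (forall t, continuity_pt h t) ->
  0 < eta < PI -> u <= v <= u + PI -> 0 <= M ->
  (forall t, u <= t <= v -> eta <= Rabs (x0 - t) <= PI /\ Rabs (h t) <= M) ->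
  - (PI * (M * cos_bump eta ^ n)) <= RInt (fun t => h t * cos_bump (x0 - t) ^ n) u v.
Proof.
  intros hc he huv hM0 hfar.
  assert (hq : 0 <= cos_bump eta ^ n) by (apply pow_le, cos_bump_nonneg).
  assert (hb : Rabs (RInt (fun t => h t * cos_bump (x0 - t) ^ n) u v)
               <= (v - u) * (M * cos_bump eta ^ n)).
  { apply abs_RInt_le_const; [lra| apply ex_RInt_continuity_pt, continuity_bump_integrand; auto|].
    intros t ht. apply bump_far_bound; [lra| |]; apply hfar; lra. }
  assert ((v - u) * (M * cos_bump eta ^ n) <= PI * (M * cos_bump eta ^ n))
    by (apply Rmult_le_compat_r; [apply Rmult_le_pos|]; lra).
  revert hb; unfold Rabs; destruct Rcase_abs; intros; lra.
Qed.

Lemma bump_near_integral (h : R -> R) x0 eps d0 n u v : (forall t, continuity_pt h t) ->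
  0 < eps < PI -> u <= v -> 0 <= d0 ->
  (forall t, u <= t <= v -> Rabs (x0 - t) <= eps /\ d0 <= h t) ->
  (v - u) * (d0 * cos_bump eps ^ n) <= RInt (fun t => h t * cos_bump (x0 - t) ^ n) u v.
Proof.
  intros hc he huv hd0 hnear.
  assert (hle := RInt_le (fun _ => d0 * cos_bump eps ^ n) (fun t => h t * cos_bump (x0 - t) ^ n) u v
    huv (ex_RInt_const _ _ _) (ex_RInt_continuity_pt _ _ _ (continuity_bump_integrand h x0 n hc))).
  rewrite RInt_const in hle. unfold scal in hle; simpl in hle; unfold mult in hle; simpl in hle.
  apply hle. intros t ht. apply bump_near_bound; [lra|lra| |]; apply hnear; lra.
Qed.

(* If h >= d0 > 0 near x0 and |h| <= M on a period, the n-th bump moment of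
   h is at least eta d0 cos_bump(eta/2)^n - 2π M cos_bump(eta)^n: split the
   period centred at x0 into [x0-π,x0-η], [x0-η,x0-η/2], [x0-η/2,x0+η/2],
   [x0+η/2,x0+η], [x0+η,x0+π]. *)
Lemma bump_moment_lower_bound (h : R -> R) x0 eta d0 M n :
  (forall t, continuity_pt h t) -> (forall t, h (t + 2 * PI) = h t) ->
  0 < eta <= PI / 2 -> 0 < d0 -> (forall t, Rabs (x0 - t) <= eta -> d0 <= h t) ->
  (forall t, x0 - PI <= t <= x0 + PI -> Rabs (h t) <= M) ->
  eta * d0 * cos_bump (eta / 2) ^ n - 2 * PI * M * cos_bump eta ^ n
    <= RInt (fun t => h t * cos_bump (x0 - t) ^ n) 0 (2 * PI).
Proof.
  intros hc hp he hd0 hnear hM.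
  pose proof PI_RGT_0 as hPI.
  assert (cphi := continuity_bump_integrand h x0 n hc).
  assert (hM0 : 0 <= M) by (pose proof (hM x0 ltac:(lra)); pose proof (Rabs_pos (h x0)); lra).
  assert (hq : 0 <= cos_bump eta ^ n) by (apply pow_le, cos_bump_nonneg).
  assert (hq' : 0 <= cos_bump (eta / 2) ^ n) by (apply pow_le, cos_bump_nonneg).
  rewrite (RInt_periodic_shift _ (x0 - PI) cphi).
  2: { intros t. rewrite hp. replace (x0 - (t + 2 * PI)) with ((x0 - t) - 2 * PI) by ring.
       rewrite cos_bump_period. reflexivity. }
  replace (x0 - PI + 2 * PI) with (x0 + PI) by ring.
  rewrite (RInt_chasles_cont _ (x0 - PI) (x0 - eta) (x0 + PI) cphi),
    (RInt_chasles_cont _ (x0 - eta) (x0 - eta / 2) (x0 + PI) cphi),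
    (RInt_chasles_cont _ (x0 - eta / 2) (x0 + eta / 2) (x0 + PI) cphi),
    (RInt_chasles_cont _ (x0 + eta / 2) (x0 + eta) (x0 + PI) cphi).
  assert (I1 := bump_far_integral h x0 eta M n (x0 - PI) (x0 - eta) hc ltac:(lra) ltac:(lra) hM0
    ltac:(intros t ht; split; [unfold Rabs; destruct Rcase_abs; lra| apply hM; lra])).
  assert (I5 := bump_far_integral h x0 eta M n (x0 + eta) (x0 + PI) hc ltac:(lra) ltac:(lra) hM0
    ltac:(intros t ht; split; [unfold Rabs; destruct Rcase_abs; lra| apply hM; lra])).
  assert (near : forall t, x0 - eta <= t <= x0 + eta -> Rabs (x0 - t) <= eta /\ d0 <= h t).
  { intros t ht. assert (Rabs (x0 - t) <= eta) by (unfold Rabs; destruct Rcase_abs; lra). auto. }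
  assert (I2 := bump_near_integral h x0 eta d0 n (x0 - eta) (x0 - eta / 2) hc ltac:(lra) ltac:(lra)
    ltac:(lra) ltac:(intros t ht; apply near; lra)).
  assert (I4 := bump_near_integral h x0 eta d0 n (x0 + eta / 2) (x0 + eta) hc ltac:(lra) ltac:(lra)
    ltac:(lra) ltac:(intros t ht; apply near; lra)).
  assert (I3 := bump_near_integral h x0 (eta / 2) d0 n (x0 - eta / 2) (x0 + eta / 2) hc ltac:(lra)
    ltac:(lra) ltac:(lra)
    ltac:(intros t ht; split; [unfold Rabs; destruct Rcase_abs; lra| apply near; lra])).
  assert (0 <= eta / 2 * (d0 * cos_bump eta ^ n)) by (apply Rmult_le_pos; [|apply Rmult_le_pos]; lra).
  unfold plus; simpl. lra.
Qed.

Lemma geometric_domination (q1 q2 A B : R) : 0 < q2 < q1 -> 0 < A ->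
  exists n : nat, B * q2 ^ n < A * q1 ^ n.
Proof.
  intros hq hA. set (rho := q1 / q2).
  assert (hrho : 1 < rho) by (unfold rho; apply (Rmult_lt_reg_r q2); [lra|]; field_simplify; lra).
  destruct (INR_unbounded (B / (A * (rho - 1)))) as [n hn]. exists n.
  assert (hAr : 0 < A * (rho - 1)) by (apply Rmult_lt_0_compat; lra).
  assert (hnB : B < INR n * (A * (rho - 1))).
  { apply (Rmult_lt_compat_r (A * (rho - 1))) in hn; auto.
    unfold Rdiv in hn. rewrite Rmult_assoc, Rinv_l in hn; lra. }
  assert (hb := Rle_pow_lin (rho - 1) n ltac:(lra)). replace (1 + (rho - 1)) with rho in hb by ring.
  assert (hq1 : q1 ^ n = rho ^ n * q2 ^ n) by (rewrite <- Rpow_mult_distr; unfold rho; f_equal; field; lra).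
  assert (hq2n : 0 < q2 ^ n) by (apply pow_lt; lra).
  assert (B < A * rho ^ n) by nra.
  rewrite hq1. nra.
Qed.

(* A continuous 2π-periodic function all of whose bump moments at x0 vanish
   satisfies h(x0) <= 0: otherwise h >= h(x0)/2 near x0 and the moments
   eventually become positive. *)
Lemma nonpos_of_bump_moments (h : R -> R) x0 : (forall t, continuity_pt h t) ->
  (forall t, h (t + 2 * PI) = h t) ->
  (forall n, RInt (fun t => h t * cos_bump (x0 - t) ^ n) 0 (2 * PI) = 0 :> R) -> h x0 <= 0.
Proof.
  intros hc hp hz. destruct (Rle_dec (h x0) 0) as [|hpos]; auto. exfalso.
  pose proof PI_RGT_0 as hPI.
  set (d0 := h x0 / 2).
  destruct (hc x0 d0 ltac:(unfold d0; lra)) as [alp [halp Ha]].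
  set (eta := Rmin (alp / 2) (PI / 2)).
  assert (he : 0 < eta) by (apply Rmin_pos; lra).
  assert (he1 : eta <= alp / 2) by apply Rmin_l.
  assert (he2 : eta <= PI / 2) by apply Rmin_r.
  assert (hnear : forall t, Rabs (x0 - t) <= eta -> d0 <= h t).
  { intros t ht. destruct (Req_dec t x0) as [->|hne]; [unfold d0; lra|].
    rewrite Rabs_minus_sym in ht.
    assert (hdist : R_dist t x0 < alp) by (unfold R_dist; lra).
    specialize (Ha t (conj (conj I (not_eq_sym hne)) hdist)).
    simpl in Ha. unfold R_dist in Ha.
    revert Ha; unfold Rabs; destruct Rcase_abs; unfold d0; intros; lra. }
  destruct (continuity_ab_maj (fun t => Rabs (h t)) (x0 - PI) (x0 + PI)) as [Mx [HM _]]; [lra| |].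
  { intros; apply (continuity_pt_comp h Rabs); auto. apply Rcontinuity_abs. }
  assert (hq : 0 < cos_bump eta < cos_bump (eta / 2)).
  { unfold cos_bump. assert (0 <= cos eta) by (apply cos_ge_0; lra).
    assert (cos eta < cos (eta / 2)) by (apply cos_decreasing_1; lra). lra. }
  destruct (geometric_domination _ _ (eta * d0) (2 * PI * Rabs (h Mx)) hq)
    as [n hn]; [apply Rmult_lt_0_compat; unfold d0; lra|].
  assert (hlow := bump_moment_lower_bound h x0 eta d0 (Rabs (h Mx)) n hc hp
    ltac:(lra) ltac:(unfold d0; lra) hnear HM).
  rewrite hz in hlow. lra.
Qed.

(* A continuous 2π-periodic function with zero mean and no Fourier modes
   of order k >= 1 vanishes: all its bump moments vanish, so h <= 0 and
   -h <= 0 everywhere. *)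
Lemma fourier_vanishing_zero (h : R -> R) : (forall t, continuity_pt h t) ->
  (forall t, h (t + 2 * PI) = h t) -> RInt h 0 (2 * PI) = 0 ->
  (forall k : nat, (1 <= k)%nat -> RInt (fun t => h t * cos (INR k * t)) 0 (2 * PI) = 0 /\
                          RInt (fun t => h t * sin (INR k * t)) 0 (2 * PI) = 0) ->
  forall x, h x = 0.
Proof.
  intros hc hp h0 hk x.
  assert (hz : forall n, RInt (fun t => h t * cos_bump (x - t) ^ n) 0 (2 * PI) = 0 :> R).
  { intros n. etransitivity; [|apply (bump_moments_vanish h hc h0 hk x n 0)]. apply RInt_ext_R.
    intros. simpl INR. rewrite Rmult_0_l, cos_0. ring. }
  assert (hle := nonpos_of_bump_moments h x hc hp hz).
  assert (hge : - h x <= 0).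
  { apply (nonpos_of_bump_moments (fun t => - h t) x).
    - intros; apply (continuity_pt_opp h); auto.
    - intros; rewrite hp; auto.
    - intros n. rewrite (RInt_ext_R _ (fun t => (-1) * (h t * cos_bump (x - t) ^ n) + 0 * 0))
        by (intros; ring).
      rewrite RInt_lincomb, hz; [ring| |apply ex_RInt_const].
      apply ex_RInt_continuity_pt, continuity_bump_integrand; auto. }
  lra.
Qed.

(* Hence a continuous 2π-periodic function whose Fourier coefficients of
   every order k >= 1 vanish is constant: apply the above to g minus its
   mean. *)
Lemma fourier_constant (g : R -> R) : (forall t, continuity_pt g t) ->
  (forall t, g (t + 2 * PI) = g t) ->
  (forall k : nat, (1 <= k)%nat -> RInt (fun t => g t * cos (INR k * t)) 0 (2 * PI) = 0 /\
                          RInt (fun t => g t * sin (INR k * t)) 0 (2 * PI) = 0) ->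
  forall t1 t2, g t1 = g t2.
Proof.
  intros hc hp hk.
  pose proof PI_RGT_0 as hPI.
  set (c := RInt g 0 (2 * PI) / (2 * PI)).
  set (h := fun t => 1 * g t + (- c) * 1).
  assert (exg : ex_RInt g 0 (2 * PI)) by (apply ex_RInt_continuity_pt; auto).
  assert (coeff_h : forall w, (forall t, continuity_pt w t) -> RInt w 0 (2 * PI) = 0 ->
            RInt (fun t => h t * w t) 0 (2 * PI) = RInt (fun t => g t * w t) 0 (2 * PI) :> R).
  { intros w hw hw0. rewrite (RInt_ext_R _ (fun t => 1 * (g t * w t) + (- c) * w t))
      by (intros; unfold h; ring).
    rewrite RInt_lincomb, hw0; [ring| |apply ex_RInt_continuity_pt; auto].
    apply ex_RInt_continuity_pt; intros; apply continuity_pt_mult; auto. }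
  assert (hzero : forall x, h x = 0).
  { apply fourier_vanishing_zero.
    - intros; unfold h. apply (continuity_pt_plus (fun t => 1 * g t) (fun _ => - c * 1));
        [apply continuity_pt_scal; auto| apply continuity_pt_const; intros ? ?; auto].
    - intros; unfold h; rewrite hp; auto.
    - unfold h. rewrite RInt_lincomb by (auto; apply ex_RInt_const).
      rewrite RInt_const. unfold scal; simpl; unfold mult; simpl. unfold c. field. lra.
    - intros k hk1. destruct (trig_integrals k hk1) as [e3 e4].
      rewrite !coeff_h; auto using continuity_cos_mul, continuity_sin_mul. }
  intros t1 t2. pose proof (hzero t1). pose proof (hzero t2). unfold h in *. lra.
Qed.

(** * Neumann solutions of radial ODEs *)

Definition neumann_solution (a b : R) (p q y : R -> R) : Prop :=
  exists y1 y2 : R -> R,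
    (forall s, a <= s <= b -> cont_within a b y s) /\
    (forall s, a <= s <= b -> cont_within a b y1 s) /\
    (forall s, a < s < b -> derivable_pt_lim y s (y1 s)) /\
    (forall s, a < s < b -> derivable_pt_lim y1 s (y2 s)) /\
    (forall s, a < s < b -> y2 s = p s * y1 s + q s * y s) /\
    y1 a = 0.

(* Two Neumann solutions for continuous coefficients: the combination of
   them vanishing at a vanishes identically, by uniqueness for the initial
   value problem with K = max (|p| + |q|). *)
Lemma neumann_solutions_dependent a b (p q y z : R -> R) : a < b ->
  (forall s, a <= s <= b -> cont_within a b p s) ->
  (forall s, a <= s <= b -> cont_within a b q s) ->
  neumann_solution a b p q y -> neumann_solution a b p q z ->
  forall al be, al * y a + be * z a = 0 ->
  forall s, a <= s <= b -> al * y s + be * z s = 0.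
Proof.
  intros hab hp hq [Y1 [Y2 [cy [cY1 [dy [dY1 [oy ny]]]]]]] [Z1 [Z2 [cz [cZ1 [dz [dZ1 [oz nz]]]]]]] al be h0.
  destruct (extreme_value_within a b (fun s => Rabs (p s) + Rabs (q s)) ltac:(lra)) as [M [hM HM]].
  { intros x hx. apply clamp_cont_within; auto.
    apply (continuity_pt_plus (fun s => Rabs (p (clamp a b s))) (fun s => Rabs (q (clamp a b s))));
      apply (continuity_pt_comp _ Rabs); try apply Rcontinuity_abs;
      apply cont_within_clamp; auto; lra. }
  set (K := Rabs (p M) + Rabs (q M)).
  assert (hK : 0 <= K) by (unfold K; pose proof (Rabs_pos (p M)); pose proof (Rabs_pos (q M)); lra).
  apply (ivp_uniqueness a b (fun s => al * y s + be * z s) (fun s => al * Y1 s + be * Z1 s)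
     (fun s => al * Y2 s + be * Z2 s) p q K); auto.
  - intros; apply cont_within_lincomb; auto; lra.
  - intros; apply cont_within_lincomb; auto; lra.
  - intros; apply derivable_pt_lim_lincomb; auto.
  - intros; apply derivable_pt_lim_lincomb; auto.
  - intros s hs. rewrite oy, oz by lra. ring.
  - intros s hs. specialize (HM s ltac:(lra)). fold K in HM.
    pose proof (Rabs_pos (p s)). pose proof (Rabs_pos (q s)). split; lra.
  - rewrite ny, nz; ring.
Qed.

Lemma neumann_solutions_proportional a b (p q y z : R -> R) : a < b ->
  (forall s, a <= s <= b -> cont_within a b p s) ->
  (forall s, a <= s <= b -> cont_within a b q s) ->
  neumann_solution a b p q y -> neumann_solution a b p q z ->
  exists al be, (al <> 0 \/ be <> 0) /\ forall s, a <= s <= b -> al * y s + be * z s = 0.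
Proof.
  intros hab hp hq hy hz.
  destruct (Req_dec (y a) 0) as [hy0|hy0]; [destruct (Req_dec (z a) 0) as [hz0|hz0]|].
  - exists 1, 0. split; [left; lra|].
    apply (neumann_solutions_dependent a b p q y z); auto. rewrite hy0, hz0; ring.
  - exists (z a), (- y a). split; [left; auto|].
    apply (neumann_solutions_dependent a b p q y z); auto. ring.
  - exists (z a), (- y a). split; [right; intro; apply hy0; lra|].
    apply (neumann_solutions_dependent a b p q y z); auto. ring.
Qed.

(** * The Jacobi eigenvalue problem on the horizon plane *)

(* The zeroth-order coefficient of the equation, V(r) = m r^-3 (1 + m/2r)^-2
   + λ (1 + m/2r)^4: the curvature term of the Jacobi operator plus the
   eigenvalue weight. *)
Definition potential (m lam s : R) : R :=
  m / s ^ 3 * / (1 + m / (2 * s)) ^ 2 + lam * (1 + m / (2 * s)) ^ 4.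

(* For λ <= 0 and k >= 1 the angular mode is never resonant:
   V(r) < k^2/r^2, because 2x <= (1+x)^2/2 for x = m/2r. *)
Lemma angular_mode_coercive m lam s (k : nat) : 0 < m -> lam <= 0 -> 0 < s -> (1 <= k)%nat ->
  0 < INR k ^ 2 / s ^ 2 - potential m lam s.
Proof.
  intros hm hl hs hk. unfold potential.
  assert (hK : 1 <= INR k) by (apply (le_INR 1); auto).
  set (x := m / (2 * s)). assert (hx : 0 < x) by (unfold x; apply Rdiv_lt_0_compat; lra).
  replace (m / s ^ 3 * / (1 + x) ^ 2) with (2 * x / (s ^ 2 * (1 + x) ^ 2)) by (unfold x; field; lra).
  assert (h4 : lam * (1 + x) ^ 4 <= 0) by (assert (0 <= (1 + x) ^ 4) by (apply pow_le; lra); nra).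
  assert (hD : 0 < (1 + x) ^ 2) by (apply pow_lt; lra).
  assert (hs2 : 0 < s ^ 2) by (apply pow_lt; lra).
  assert (2 * x / (s ^ 2 * (1 + x) ^ 2) < INR k ^ 2 / s ^ 2); [|lra].
  apply (Rmult_lt_reg_r (s ^ 2 * (1 + x) ^ 2)); [apply Rmult_lt_0_compat; auto|].
  replace (2 * x / (s ^ 2 * (1 + x) ^ 2) * (s ^ 2 * (1 + x) ^ 2)) with (2 * x) by (field; lra).
  replace (INR k ^ 2 / s ^ 2 * (s ^ 2 * (1 + x) ^ 2)) with (INR k ^ 2 * (1 + x) ^ 2) by (field; lra).
  assert (1 <= INR k ^ 2) by (simpl; nra).
  assert (4 * x <= (1 + x) ^ 2) by (pose proof (Rle_0_sqr (1 - x)); unfold Rsqr in *; simpl; nra).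
  assert (1 * (1 + x) ^ 2 <= INR k ^ 2 * (1 + x) ^ 2) by (apply Rmult_le_compat_r; lra).
  lra.
Qed.

Lemma radial_coeffs_continuous m lam Rr s : 0 < m -> m / 2 <= s <= Rr ->
  cont_within (m / 2) Rr (fun s => - / s) s /\ cont_within (m / 2) Rr (fun s => - potential m lam s) s.
Proof.
  intros hm hs. split; apply continuity_pt_cont_within, (proj2 (continuity_pt_filterlim _ _)).
  - change (continuous (fun s => - / s) s).
    apply (ex_derive_continuous (K:=R_AbsRing) (V:=R_NormedModule)). auto_derive. lra.
  - change (continuous (fun s => - potential m lam s) s).
    apply (ex_derive_continuous (K:=R_AbsRing) (V:=R_NormedModule)). unfold potential. auto_derive.
    assert (0 < m / (2 * s)) by (apply Rdiv_lt_0_compat; lra).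
    repeat split; try lra; apply Rgt_not_eq; repeat apply Rmult_lt_0_compat; lra.
Qed.

Section EigenvalueProblem.
Local Open Scope list_scope.

Variables (m Rr lam : R) (F : list bool -> R -> R -> R).
Hypothesis hm : 0 < m.
Hypothesis hR : m / 2 < Rr.
Hypothesis hlam : lam <= 0.
Hypothesis hper : forall r t, F nil r (t + 2 * PI) = F nil r t.
Hypothesis hcont : forall w, cont_strip (m / 2) Rr (F w).
Hypothesis hdr : forall w r t, in_strip (m / 2) Rr r ->
  deriv_within (m / 2) Rr (fun s => F w s t) r (F (true :: w) r t).
Hypothesis hdt : forall w r t, in_strip (m / 2) Rr r ->
  derivable_pt_lim (fun s => F w r s) t (F (false :: w) r t).
Hypothesis hpde : forall r t, in_strip (m / 2) Rr r ->
  F (true :: true :: nil) r t + F (true :: nil) r t / r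
  + F (false :: false :: nil) r t / r ^ 2
  + m / r ^ 3 * / (1 + m / (2 * r)) ^ 2 * F nil r t
  + lam * (1 + m / (2 * r)) ^ 4 * F nil r t = 0.
Hypothesis hneu : forall t, F (true :: nil) (m / 2) t = 0.
Hypothesis hdir : forall t, F nil Rr t = 0.

Lemma angular_continuity v r t : m / 2 <= r <= Rr -> continuity_pt (F v r) t.
Proof. intros hr. eapply continuity_of_deriv, hdt. exact hr. Qed.

Lemma radial_derivative v r t : m / 2 < r < Rr ->
  derivable_pt_lim (fun s => F v s t) r (F (true :: v) r t).
Proof. intros hr. apply (deriv_within_interior (m / 2) Rr); auto. apply hdr. unfold in_strip; lra. Qed.

Lemma pde_solved r t : m / 2 <= r <= Rr ->
  F (true :: true :: nil) r t = (- / r) * F (true :: nil) r t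
    + (- / r ^ 2) * F (false :: false :: nil) r t + (- potential m lam r) * F nil r t.
Proof.
  intros hr. assert (hp := hpde r t hr). unfold potential.
  replace (F (true :: true :: nil) r t) with
    (- (F (true :: nil) r t / r + F (false :: false :: nil) r t / r ^ 2
        + m / r ^ 3 * / (1 + m / (2 * r)) ^ 2 * F nil r t
        + lam * (1 + m / (2 * r)) ^ 4 * F nil r t)) by lra.
  field. assert (0 < m / (2 * r)) by (apply Rdiv_lt_0_compat; lra). split; lra.
Qed.

(* Each Fourier coefficient I(r) = ∫ F(r,t) w(t) dt against a mode of
   frequency k >= 1 solves I'' = -I'/r + (k^2/r^2 - V) I with I'(m/2) = 0,
   I(R) = 0, hence vanishes by the maximum principle. *)
Lemma mode_coefficient_vanishes (k : nat) w : (1 <= k)%nat -> trig_mode (INR k) w ->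
  forall r, m / 2 <= r <= Rr -> RInt (fun t => F nil r t * w t) 0 (2 * PI) = 0.
Proof.
  intros hk hmode.
  pose proof PI_RGT_0 as hPI.
  assert (hw := trig_mode_continuous _ _ hmode).
  assert (hw1 : forall t, Rabs (w t) <= 1) by apply hmode.
  set (I := fun v r => RInt (fun t => F v r t * w t) 0 (2 * PI)).
  assert (exI : forall v r, m / 2 <= r <= Rr -> ex_RInt (fun t => F v r t * w t) 0 (2 * PI)).
  { intros; apply ex_RInt_continuity_pt; intros; apply continuity_pt_mult; auto;
      apply angular_continuity; auto. }
  assert (hcoef : forall s, m / 2 <= s <= Rr -> I (false :: false :: nil) s = - INR k ^ 2 * I nil s).
  { intros s hs. unfold I.
    apply (mode_coeff_second_deriv _ w (F nil s) (F (false :: nil) s));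
      [exact hmode| intros; apply hdt; exact hs| intros; apply hdt; exact hs
      | intros; apply angular_continuity; exact hs| intros; apply hper]. }
  assert (Icont : forall v s, m / 2 <= s <= Rr -> cont_within (m / 2) Rr (I v) s).
  { intros v s hs. apply (param_RInt_cont (m / 2) Rr 0 (2 * PI) w); auto; [lra|].
    intros; apply angular_continuity; auto. }
  assert (Ideriv : forall v s, m / 2 < s < Rr -> derivable_pt_lim (I v) s (I (true :: v) s)).
  { intros v s hs. apply (param_RInt_deriv (m / 2) Rr 0 (2 * PI) w); auto; try lra.
    - intros; apply radial_derivative; auto.
    - intros; apply angular_continuity; auto.
    - intros; apply angular_continuity; auto. }
  apply (mixed_problem_trivial (m / 2) Rr (I nil) (I (true :: nil)) (I (true :: true :: nil))
     (fun s => - / s) (fun s => INR k ^ 2 / s ^ 2 - potential m lam s)); auto.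
  - unfold I. rewrite (RInt_ext_R _ (fun _ => 0)) by (intros; rewrite hneu; ring).
    rewrite RInt_const. unfold scal; simpl; unfold mult; simpl. ring.
  - unfold I. rewrite (RInt_ext_R _ (fun _ => 0)) by (intros; rewrite hdir; ring).
    rewrite RInt_const. unfold scal; simpl; unfold mult; simpl. ring.
  - intros s hs.
    assert (Eode : I (true :: true :: nil) s = RInt (fun t =>
        (- / s) * (F (true :: nil) s t * w t) + (- / s ^ 2) * (F (false :: false :: nil) s t * w t)
        + (- potential m lam s) * (F nil s t * w t)) 0 (2 * PI)).
    { apply RInt_ext_R. intros t _. rewrite pde_solved by auto. ring. }
    rewrite Eode, RInt_lincomb3 by auto. fold (I (true :: nil) s) (I (false :: false :: nil) s) (I nil s).
    rewrite hcoef by auto. field. lra.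
  - intros s hs. apply angular_mode_coercive; auto; lra.
Qed.

Lemma solution_radial r t1 t2 : m / 2 <= r <= Rr -> F nil r t1 = F nil r t2.
Proof.
  intros hr. apply fourier_constant.
  - intros; apply angular_continuity; auto.
  - intros; apply hper.
  - intros k hk. split; apply (mode_coefficient_vanishes k); auto using trig_mode_cos, trig_mode_sin.
Qed.

Lemma radial_profile_neumann :
  neumann_solution (m / 2) Rr (fun s => - / s) (fun s => - potential m lam s) (fun s => F nil s 0).
Proof.
  assert (hF1 : forall r t, m / 2 <= r <= Rr -> F (false :: nil) r t = 0).
  { intros r t hr. apply (uniqueness_limite (fun s => F nil r s) t); [apply hdt; exact hr|].
    apply (derivable_pt_lim_ext (fun _ => F nil r 0)); [intros; apply solution_radial; auto|].
    apply derivable_pt_lim_const. }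
  assert (hF2 : forall r t, m / 2 <= r <= Rr -> F (false :: false :: nil) r t = 0).
  { intros r t hr. apply (uniqueness_limite (fun s => F (false :: nil) r s) t); [apply hdt; exact hr|].
    apply (derivable_pt_lim_ext (fun _ => 0)); [intros; symmetry; apply hF1; auto|].
    apply derivable_pt_lim_const. }
  exists (fun s => F (true :: nil) s 0), (fun s => F (true :: true :: nil) s 0).
  repeat split.
  - intros s hs. apply cont_strip_slice; auto.
  - intros s hs. apply cont_strip_slice; auto.
  - intros s hs. apply radial_derivative; auto.
  - intros s hs. apply radial_derivative; auto.
  - intros s hs. rewrite pde_solved, hF2 by lra. ring.
  - apply hneu.
Qed.

End EigenvalueProblem.

Theorem mainTheorem5 (m Rr lam : R) (hm : 0 < m) (hR : m / 2 < Rr) (hlam : lam <= 0) :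
  (forall u : R -> R -> R, is_solution m Rr lam u ->
     forall r t1 t2, m / 2 <= r <= Rr -> u r t1 = u r t2) /\
  (forall u v : R -> R -> R, is_solution m Rr lam u -> is_solution m Rr lam v ->
     exists a b : R, (a <> 0 \/ b <> 0) /\
       forall r t, m / 2 <= r <= Rr -> a * u r t + b * v r t = 0).
Proof.
  assert (radial : forall u, is_solution m Rr lam u ->
            forall r t1 t2, m / 2 <= r <= Rr -> u r t1 = u r t2).
  { intros u [hper [F [[<- [hcont [hdr hdt]]] [hpde [hneu hdir]]]]].
    exact (solution_radial m Rr lam F hm hR hlam hper hcont hdr hdt hpde hneu hdir). }
  assert (profile : forall u, is_solution m Rr lam u -> neumann_solution (m / 2) Rr
            (fun s => - / s) (fun s => - potential m lam s) (fun s => u s 0)).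
  { intros u [hper [F [[<- [hcont [hdr hdt]]] [hpde [hneu hdir]]]]].
    exact (radial_profile_neumann m Rr lam F hm hR hlam hper hcont hdr hdt hpde hneu hdir). }
  split; [exact radial|].
  intros u v hu hv.
  destruct (neumann_solutions_proportional (m / 2) Rr _ _ _ _ hR
    (fun s hs => proj1 (radial_coeffs_continuous m lam Rr s hm hs))
    (fun s hs => proj2 (radial_coeffs_continuous m lam Rr s hm hs))
    (profile u hu) (profile v hv)) as [a [b [hab H]]].
  exists a, b. split; [exact hab|]. intros r t hr.
  rewrite (radial u hu r t 0 hr), (radial v hv r t 0 hr). apply H, hr.
Qed.
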